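(* Let $m_x,m_y,m_z\in(0,1)$, $\alpha\in(0,1)$, $c>0$ and $\mu>0$, and let $\rho:[0,\infty)\to[0,1]$ be a decreasing function with $\rho(0)=1$ and $\lim_{w\to\infty}\rho(w)=0$. Consider the discrete-time system on the state space $\{(x,y,z): x\ge 0,\ y\ge 0,\ z>0\}$ $$\begin{aligned} x(t+1)&=(1-m_x)x(t)+\alpha c\,\rho(c\,x(t))\,\frac{y(t)}{y(t)+z(t)}\,x(t),\\ y(t+1)&=(1-m_y)y(t)+(1-\alpha)c\,\rho(c\,x(t))\,\frac{y(t)}{y(t)+z(t)}\,x(t)+c\,\rho(c\,x(t))\,\frac{z(t)}{y(t)+z(t)}\,x(t),\\ z(t+1)&=(1-m_z)z(t)+\mu . \end{aligned}$$ Then the extinction equilibrium $\left(0,0,\dfrac{\mu}{m_z}\right)$ is locally asymptotically stable: it is Lyapunov stable, and there is a neighborhood $U$ of it in the state space such that every trajectory starting in $U$ converges to $\left(0,0,\dfrac{\mu}{m_z}\right)$ as $t\to\infty$.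
   Context: The variables $x,y,z$ are the numbers of adult females, adult males and ''supermales'' (YY males, whose offspring are all male) of an invasive fish population; $t$ counts life cycles. The mortality rates are $m_i=1-p_iq_i$ with survival probabilities $p_i,q_i\in(0,1)$ in the two life stages, $c$ is the fecundity, $\alpha$ is the fraction of surviving juveniles becoming female, $\rho$ is the density-dependent juvenile survival probability, and $\mu$ is the number of supermales released per life cycle. *)

From Stdlib Require Import Reals.
Open Scope R_scope.

Definition step (mx my mz alpha c mu : R) (rho : R -> R) (s : R * R * R)
  : R * R * R :=
  let '(x, y, z) := s in
  ( (1 - mx) * x + alpha * c * rho (c * x) * (y / (y + z)) * x,
    (1 - my) * y + (1 - alpha) * c * rho (c * x) * (y / (y + z)) * x
      + c * rho (c * x) * (z / (y + z)) * x,
    (1 - mz) * z + mu ).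

Fixpoint traj (mx my mz alpha c mu : R) (rho : R -> R) (s0 : R * R * R)
  (t : nat) : R * R * R :=
  match t with
  | O => s0
  | S t' => step mx my mz alpha c mu rho (traj mx my mz alpha c mu rho s0 t')
  end.

Definition in_state_space (s : R * R * R) : Prop :=
  let '(x, y, z) := s in 0 <= x /\ 0 <= y /\ 0 < z.

Definition dist3 (s u : R * R * R) : R :=
  let '(x, y, z) := s in
  let '(a, b, d) := u in
  Rmax (Rabs (x - a)) (Rmax (Rabs (y - b)) (Rabs (z - d))).

Definition converges3 (u : nat -> R * R * R) (e : R * R * R) : Prop :=
  forall eps, 0 < eps -> exists N : nat, forall t, (N <= t)%nat -> dist3 (u t) e < eps.

(** The extinction equilibrium is stable because a weighted population size
    [V = y + K x] with [K = 1 + 4 c / m_x] is a local Lyapunov function.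
    Once [z] is within [z*/2] of [z* = mu / m_z] and [y] is small, the
    fraction [y / (y + z)] of males among fathers is so small that female
    recruitment is at most half of the female mortality [m_x x]; male
    recruitment is at most [c x], which the weight [K] absorbs.  Hence
    [V] contracts by the factor [max (1 - m_y) (1 - m_x / 4)], while
    [z - z*] contracts by [1 - m_z], and both stay in the region where the
    estimate holds. *)

From Stdlib Require Import Reals Lra Psatz.
Open Scope R_scope.

Lemma pow_le_1 (r : R) (n : nat) : 0 <= r <= 1 -> 0 <= r ^ n <= 1.
Proof.
  intros Hr; split.
  - now apply pow_le.
  - rewrite <- (pow1 n); now apply pow_incr.
Qed.

Lemma geometric_eventually_lt (r M eps : R) :
  0 <= r < 1 -> 0 <= M -> 0 < eps ->
  exists N : nat, forall t, (N <= t)%nat -> r ^ t * M < eps.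
Proof.
  intros Hr HM Heps.
  assert (Hr_abs : Rabs r < 1) by (rewrite Rabs_pos_eq; lra).
  assert (Hquot : 0 < eps / (M + 1)) by (apply Rdiv_lt_0_compat; lra).
  destruct (pow_lt_1_zero r Hr_abs _ Hquot) as [N HN].
  exists N; intros t Ht.
  specialize (HN t Ht); rewrite Rabs_pos_eq in HN by (apply pow_le; lra).
  assert (Hlt : r ^ t * (M + 1) < eps / (M + 1) * (M + 1))
    by (apply Rmult_lt_compat_r; lra).
  replace (eps / (M + 1) * (M + 1)) with eps in Hlt by (field; lra).
  assert (0 <= r ^ t) by (apply pow_le; lra).
  nra.
Qed.

Lemma Rlt_div_mult (a d k : R) : 0 < k -> d < a / k -> k * d < a.
Proof.
  intros Hk Hd.
  replace a with (k * (a / k)) by (field; lra).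
  now apply Rmult_lt_compat_l.
Qed.

Lemma dist3_nonneg (s u : R * R * R) : 0 <= dist3 s u.
Proof.
  destruct s as [[x y] z], u as [[a b] d]; cbn.
  eapply Rle_trans; [apply Rabs_pos | apply Rmax_l].
Qed.

Section ExtinctionEquilibrium.

Variables (mx my mz alpha c mu : R) (rho : R -> R).

Hypothesis mx_range : 0 < mx < 1.
Hypothesis my_range : 0 < my < 1.
Hypothesis mz_range : 0 < mz < 1.
Hypothesis alpha_range : 0 < alpha < 1.
Hypothesis c_gt0 : 0 < c.
Hypothesis mu_gt0 : 0 < mu.
Hypothesis rho_range : forall w, 0 <= w -> 0 <= rho w <= 1.

Local Notation F := (step mx my mz alpha c mu rho).
Local Notation orbit := (traj mx my mz alpha c mu rho).

Definition zstar : R := mu / mz.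

Definition weight : R := 1 + 4 * c / mx.

Definition lyap (s : R * R * R) : R := let '(x, y, _) := s in y + weight * x.

Definition deviation (s : R * R * R) : R := Rmax (lyap s) (Rabs (snd s - zstar)).

(* Chosen so that [alpha c y / (zstar / 2) <= mx / 2] whenever [y <= ybound]. *)
Definition ybound : R := mx * zstar / (4 * alpha * c).

Definition basin_radius : R := Rmin (zstar / 2) ybound.

Definition rate : R := Rmax (Rmax (1 - my) (1 - mx / 4)) (1 - mz).

Lemma zstar_gt0 : 0 < zstar.
Proof. unfold zstar; apply Rdiv_lt_0_compat; lra. Qed.

Lemma weight_ge1 : 1 <= weight.
Proof.
  unfold weight; assert (0 < 4 * c / mx) by (apply Rdiv_lt_0_compat; lra); lra.
Qed.

Lemma basin_radius_gt0 : 0 < basin_radius.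
Proof.
  pose proof zstar_gt0.
  apply Rmin_pos; [lra|].
  unfold ybound; apply Rdiv_lt_0_compat; nra.
Qed.

Lemma rate_range : 0 <= rate < 1.
Proof.
  unfold rate; split.
  - eapply Rle_trans; [|apply Rmax_r]; lra.
  - repeat apply Rmax_lub_lt; lra.
Qed.

Lemma step_z (s : R * R * R) : snd (F s) - zstar = (1 - mz) * (snd s - zstar).
Proof. destruct s as [[x y] z]; cbn; unfold zstar; field; lra. Qed.

Lemma step_in_state_space (s : R * R * R) :
  in_state_space s -> in_state_space (F s).
Proof.
  destruct s as [[x y] z]; cbn; intros (Hx & Hy & Hz).
  destruct (rho_range (c * x)) as [Hr _]; [nra|].
  set (r := rho (c * x)) in *; set (f := y / (y + z)); set (g := z / (y + z)).
  assert (Hf : 0 <= f) by (apply Rmult_le_pos; [|left; apply Rinv_0_lt_compat]; lra).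
  assert (Hg : 0 <= g) by (apply Rmult_le_pos; [|left; apply Rinv_0_lt_compat]; lra).
  clearbody f g.
  assert (Hrfx : 0 <= c * r * f * x) by (repeat apply Rmult_le_pos; lra).
  assert (Hrgx : 0 <= c * r * g * x) by (repeat apply Rmult_le_pos; lra).
  repeat split; nra.
Qed.

Lemma female_recruitment_le (x y z : R) :
  0 <= x -> 0 <= y <= ybound -> zstar / 2 <= z ->
  alpha * c * rho (c * x) * (y / (y + z)) <= mx / 2.
Proof.
  intros Hx Hy Hz; pose proof zstar_gt0.
  destruct (rho_range (c * x)) as [Hr0 Hr1]; [nra|].
  set (f := y / (y + z)).
  assert (Hf0 : 0 <= f) by (apply Rmult_le_pos; [|left; apply Rinv_0_lt_compat]; lra).
  assert (Hfy : f * (y + z) = y) by (unfold f; field; lra).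
  assert (Hy4 : 4 * alpha * c * y <= mx * zstar).
  { assert (ybound * (4 * alpha * c) = mx * zstar) by (unfold ybound; field; lra).
    assert (0 < 4 * alpha * c) by nra.
    nra. }
  clearbody f.
  assert (Hacf0 : 0 <= alpha * c * f) by (apply Rmult_le_pos; nra).
  assert (Hacf : alpha * c * f <= mx / 2).
  { apply (Rmult_le_reg_l (zstar / 2)); [lra|].
    assert (alpha * c * f * (zstar / 2) <= alpha * c * f * (y + z))
      by (apply Rmult_le_compat_l; lra).
    assert (alpha * c * f * (y + z) = alpha * c * y) by (rewrite Rmult_assoc, Hfy; reflexivity).
    lra. }
  nra.
Qed.

Lemma male_recruitment_le (x y z : R) :
  0 <= x -> 0 <= y -> 0 < z ->
  (1 - alpha) * c * rho (c * x) * (y / (y + z)) * x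
    + c * rho (c * x) * (z / (y + z)) * x <= c * x.
Proof.
  intros Hx Hy Hz.
  destruct (rho_range (c * x)) as [Hr0 Hr1]; [nra|].
  set (r := rho (c * x)) in *; set (f := y / (y + z)); set (g := z / (y + z)).
  assert (Hfg : f + g = 1) by (unfold f, g; field; lra).
  assert (Hf0 : 0 <= f) by (apply Rmult_le_pos; [|left; apply Rinv_0_lt_compat]; lra).
  assert (Hg0 : 0 <= g) by (apply Rmult_le_pos; [|left; apply Rinv_0_lt_compat]; lra).
  clearbody f g.
  assert (Hmix : 0 <= (1 - alpha) * f + g <= 1)
    by (assert (0 <= alpha * f) by (apply Rmult_le_pos; lra); nra).
  assert (Hprod : r * ((1 - alpha) * f + g) <= 1) by nra.
  replace ((1 - alpha) * c * r * f * x + c * r * g * x)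
    with (c * x * (r * ((1 - alpha) * f + g))) by ring.
  rewrite <- (Rmult_1_r (c * x)) at 2.
  apply Rmult_le_compat_l; nra.
Qed.

Lemma step_lyap_le (x y z : R) :
  0 <= x -> 0 <= y <= ybound -> zstar / 2 <= z ->
  lyap (F (x, y, z)) <= Rmax (1 - my) (1 - mx / 4) * lyap (x, y, z).
Proof.
  intros Hx Hy Hz; pose proof zstar_gt0; pose proof weight_ge1.
  cbn [step lyap].
  pose proof (female_recruitment_le x y z Hx Hy Hz) as Hfem.
  pose proof (male_recruitment_le x y z Hx ltac:(lra) ltac:(lra)) as Hmale.
  set (a := alpha * c * rho (c * x) * (y / (y + z))) in *.
  assert (Hx' : (1 - mx) * x + a * x <= (1 - mx / 2) * x) by nra.
  assert (Hweight : c <= weight * mx / 4)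
    by (replace (weight * mx / 4) with (mx / 4 + c) by (unfold weight; field; lra); lra).
  assert (Hq1 : 1 - my <= Rmax (1 - my) (1 - mx / 4)) by apply Rmax_l.
  assert (Hq2 : 1 - mx / 4 <= Rmax (1 - my) (1 - mx / 4)) by apply Rmax_r.
  set (q := Rmax (1 - my) (1 - mx / 4)) in *; clearbody q a.
  assert (weight * ((1 - mx) * x + a * x) <= weight * ((1 - mx / 2) * x))
    by (apply Rmult_le_compat_l; lra).
  assert (0 <= (weight * mx / 4 - c) * x) by (apply Rmult_le_pos; lra).
  assert (0 <= (q - (1 - my)) * y) by (apply Rmult_le_pos; lra).
  assert (0 <= (q - (1 - mx / 4)) * (weight * x))
    by (apply Rmult_le_pos; [lra | apply Rmult_le_pos; lra]).
  lra.
Qed.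

Lemma step_deviation_le (s : R * R * R) :
  in_state_space s -> deviation s <= basin_radius -> deviation (F s) <= rate * deviation s.
Proof.
  intros Hs Hdev; pose proof weight_ge1.
  assert (Hlyap : lyap s <= deviation s) by apply Rmax_l.
  assert (Hzdev : Rabs (snd s - zstar) <= deviation s) by apply Rmax_r.
  assert (Hr1 : basin_radius <= zstar / 2) by apply Rmin_l.
  assert (Hr2 : basin_radius <= ybound) by apply Rmin_r.
  assert (Hq : Rmax (1 - my) (1 - mx / 4) <= rate) by apply Rmax_l.
  assert (Hqz : 1 - mz <= rate) by apply Rmax_r.
  assert (Hq0 : 0 <= Rmax (1 - my) (1 - mx / 4))
    by (eapply Rle_trans; [|apply Rmax_r]; lra).
  set (d := deviation s) in *; clearbody d.
  destruct s as [[x y] z]; destruct Hs as (Hx & Hy & Hz); cbn in Hzdev.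
  assert (Hlyap0 : 0 <= lyap (x, y, z)) by (cbn; nra).
  unfold deviation; apply Rmax_lub.
  - assert (Hzlow : zstar / 2 <= z).
    { assert (- (z - zstar) <= Rabs (z - zstar))
        by (rewrite <- Rabs_Ropp; apply Rle_abs).
      lra. }
    assert (Hyb : y <= ybound) by (cbn in Hlyap; nra).
    pose proof (step_lyap_le x y z Hx (conj Hy Hyb) Hzlow) as Hstep.
    assert (Rmax (1 - my) (1 - mx / 4) * lyap (x, y, z) <= rate * d)
      by (apply Rmult_le_compat; lra).
    lra.
  - rewrite step_z, Rabs_mult, Rabs_pos_eq by lra; cbn [snd].
    pose proof (Rabs_pos (z - zstar)).
    apply Rmult_le_compat; lra.
Qed.

Lemma traj_deviation_le (s0 : R * R * R) :
  in_state_space s0 -> deviation s0 <= basin_radius ->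
  forall t, in_state_space (orbit s0 t) /\ deviation (orbit s0 t) <= rate ^ t * deviation s0.
Proof.
  intros Hs0 Hdev0 t; pose proof rate_range.
  assert (Hdev0_pos : 0 <= deviation s0) by
    (eapply Rle_trans; [apply Rabs_pos | apply Rmax_r]).
  induction t as [|t [Hs Hdev]]; cbn [traj pow]; [split; [assumption | lra]|].
  assert (Hpow := pow_le_1 rate t ltac:(lra)).
  assert (rate ^ t * deviation s0 <= deviation s0)
    by (rewrite <- (Rmult_1_l (deviation s0)) at 2; apply Rmult_le_compat_r; lra).
  assert (Hdev_small : deviation (orbit s0 t) <= basin_radius) by lra.
  split; [now apply step_in_state_space|].
  eapply Rle_trans; [now apply step_deviation_le|].
  rewrite Rmult_assoc; apply Rmult_le_compat_l; lra.
Qed.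

Lemma dist3_le_deviation (s : R * R * R) :
  in_state_space s -> dist3 s (0, 0, zstar) <= deviation s.
Proof.
  pose proof weight_ge1.
  destruct s as [[x y] z]; intros (Hx & Hy & Hz); unfold deviation, lyap; cbn.
  rewrite !Rminus_0_r, (Rabs_pos_eq x), (Rabs_pos_eq y) by lra.
  assert (Hwx : x <= weight * x) by nra.
  assert (Hl : y + weight * x <= Rmax (y + weight * x) (Rabs (z - zstar))) by apply Rmax_l.
  assert (Hr : Rabs (z - zstar) <= Rmax (y + weight * x) (Rabs (z - zstar))) by apply Rmax_r.
  repeat apply Rmax_lub; lra.
Qed.

Lemma deviation_le_dist3 (s : R * R * R) :
  in_state_space s -> deviation s <= (1 + weight) * dist3 s (0, 0, zstar).
Proof.
  pose proof weight_ge1.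
  destruct s as [[x y] z]; intros (Hx & Hy & Hz); unfold deviation, lyap; cbn.
  rewrite !Rminus_0_r, (Rabs_pos_eq x), (Rabs_pos_eq y) by lra.
  set (d := Rmax x (Rmax y (Rabs (z - zstar)))).
  assert (Hxd : x <= d) by apply Rmax_l.
  assert (Hyd : y <= d) by (eapply Rle_trans; [apply Rmax_l | apply Rmax_r]).
  assert (Hzd : Rabs (z - zstar) <= d)
    by (eapply Rle_trans; [apply Rmax_r | apply Rmax_r]).
  apply Rmax_lub; nra.
Qed.

Lemma dist3_traj_le (s0 : R * R * R) (t : nat) :
  in_state_space s0 -> (1 + weight) * dist3 s0 (0, 0, zstar) <= basin_radius ->
  dist3 (orbit s0 t) (0, 0, zstar) <= rate ^ t * ((1 + weight) * dist3 s0 (0, 0, zstar)).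
Proof.
  intros Hs0 Hd0; pose proof rate_range.
  pose proof (deviation_le_dist3 s0 Hs0) as Hdev0.
  destruct (traj_deviation_le s0 Hs0 ltac:(lra) t) as [Hs Hdev].
  eapply Rle_trans; [now apply dist3_le_deviation|].
  eapply Rle_trans; [exact Hdev|].
  apply Rmult_le_compat_l; [apply pow_le|]; lra.
Qed.

Lemma extinction_lyapunov_stable (eps : R) :
  0 < eps -> exists delta, 0 < delta /\
    forall s0, in_state_space s0 -> dist3 s0 (0, 0, zstar) < delta ->
      forall t : nat, dist3 (orbit s0 t) (0, 0, zstar) < eps.
Proof.
  intros Heps; pose proof weight_ge1; pose proof basin_radius_gt0.
  exists (Rmin basin_radius eps / (1 + weight)); split.
  - apply Rdiv_lt_0_compat; [apply Rmin_pos|]; lra.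
  - intros s0 Hs0 Hd0 t.
    apply Rlt_div_mult in Hd0; [|lra].
    assert (Hr : Rmin basin_radius eps <= basin_radius) by apply Rmin_l.
    assert (He : Rmin basin_radius eps <= eps) by apply Rmin_r.
    pose proof (dist3_traj_le s0 t Hs0 ltac:(lra)) as Ht.
    pose proof rate_range; assert (Hpow := pow_le_1 rate t ltac:(lra)).
    assert (0 <= (1 + weight) * dist3 s0 (0, 0, zstar))
      by (apply Rmult_le_pos; [lra | apply dist3_nonneg]).
    nra.
Qed.

Lemma extinction_attractive :
  exists delta, 0 < delta /\
    forall s0, in_state_space s0 -> dist3 s0 (0, 0, zstar) < delta ->
      converges3 (orbit s0) (0, 0, zstar).
Proof.
  pose proof weight_ge1; pose proof basin_radius_gt0.
  exists (basin_radius / (1 + weight)); split; [apply Rdiv_lt_0_compat; lra|].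
  intros s0 Hs0 Hd0 eps Heps.
  apply Rlt_div_mult in Hd0; [|lra].
  assert (Hd0_pos : 0 <= (1 + weight) * dist3 s0 (0, 0, zstar))
    by (apply Rmult_le_pos; [lra | apply dist3_nonneg]).
  destruct (geometric_eventually_lt rate _ eps rate_range Hd0_pos Heps) as [N HN].
  exists N; intros t Ht.
  eapply Rle_lt_trans; [apply dist3_traj_le; [assumption | lra] | now apply HN].
Qed.

End ExtinctionEquilibrium.

Theorem mainTheorem2 (mx my mz alpha c mu : R) (rho : R -> R) :
  0 < mx < 1 -> 0 < my < 1 -> 0 < mz < 1 -> 0 < alpha < 1 ->
  0 < c -> 0 < mu ->
  (forall w, 0 <= w -> 0 <= rho w <= 1) ->
  (forall u v, 0 <= u -> u <= v -> rho v <= rho u) ->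
  rho 0 = 1 ->
  (forall eps, 0 < eps -> exists W, forall w, W <= w -> Rabs (rho w) < eps) ->
  let e := (0, 0, mu / mz) in
  (* Lyapunov stability *)
  (forall eps, 0 < eps -> exists delta, 0 < delta /\
     forall s0, in_state_space s0 -> dist3 s0 e < delta ->
       forall t : nat, dist3 (traj mx my mz alpha c mu rho s0 t) e < eps) /\
  (* local attractivity *)
  (exists delta, 0 < delta /\
     forall s0, in_state_space s0 -> dist3 s0 e < delta ->
       converges3 (traj mx my mz alpha c mu rho s0) e).
Proof.
  intros Hmx Hmy Hmz Halpha Hc Hmu Hrho _ _ _ e.
  split.
  - intros eps Heps.
    exact (extinction_lyapunov_stable mx my mz alpha c mu rho
             Hmx Hmy Hmz Halpha Hc Hmu Hrho eps Heps).
  - exact (extinction_attractive mx my mz alpha c mu rho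
             Hmx Hmy Hmz Halpha Hc Hmu Hrho).
Qed.
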